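(* Let $\varphi$ be a timelike ruled surface of type $M^1_+$ in $\mathbb{R}^3_1$ and let the ruled surface $\varphi^*$ of type $M^2_+$ be a Mannheim offset of $\varphi$. Let $\varphi_{h^*}$ and $\varphi_{a^*}$ be the trajectory ruled surfaces generated by the vectors $\vec h^*$ and $\vec a^*$ of $\varphi^*$. Then (a) $\varphi_{h^*}$ is a Bertrand offset of $\varphi$; (b) $\varphi_{a^*}$ is a Mannheim offset of $\varphi$.
   Context: Work in Minkowski 3-space $\mathbb{R}^3_1$ with $\langle x,y\rangle=-x_1y_1+x_2y_2+x_3y_3$, $\|x\|=\sqrt{|\langle x,x\rangle|}$, and Lorentzian cross product $x\times y=(x_2y_3-x_3y_2,\,x_1y_3-x_3y_1,\,x_2y_1-x_1y_2)$. A ruled surface is $\varphi(s,v)=\vec c(s)+v\vec q(s)$ with $\vec q$ a unit non-null vector field, $d\vec q/ds$ non-null, and $\vec c$ the striction curve ($\langle d\vec q/ds,d\vec c/ds\rangle=0$). Its Frenet frame $\{\vec q,\vec h,\vec a\}$ has central normal $\vec h=\frac{d\vec q/ds}{\|d\vec q/ds\|}$ and asymptotic normal $\vec a=\frac{(d\vec q/ds)\times\vec q}{\|d\vec q/ds\|}$. Type $M^1_+$: $\vec q$ and $\vec h$ spacelike (a timelike surface); type $M^2_+$: $\vec h$ timelike, $\vec q$ and $d\vec q/ds$ spacelike (a spacelike surface). A ruled surface $\varphi^*(s,v)=\vec c^*(s)+v\vec q^*(s)$ with Frenet frame $\{\vec q^*,\vec h^*,\vec a^*\}$ is a Mannheim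 offset of a ruled surface $\varphi$ if there is a one-to-one correspondence between their rulings such that the asymptotic normal of $\varphi$ is (up to sign) the central normal of $\varphi^*$, i.e. $\vec h^*=\vec a$; it is a Bertrand offset of $\varphi$ if there is a one-to-one correspondence between their rulings such that their central normals coincide (up to sign). Here $\vec c^*=\vec c+R\vec a$ and, with $\theta$ the angle between $\vec q$ and $\vec q^*$, $\vec q^*=\cos\theta\,\vec q+\sin\theta\,\vec h$, $\vec a^*=\sin\theta\,\vec q-\cos\theta\,\vec h$. The trajectory ruled surfaces are $\varphi_{h^*}(s,v)=\vec c^*(s)+v\vec h^*(s)$ and $\varphi_{a^*}(s,v)=\vec c^*(s)+v\vec a^*(s)$. *)

From Stdlib Require Import Reals.
From Coquelicot Require Import Coquelicot.
Open Scope R_scope.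

Definition V3 : Type := (R * R * R)%type.
Definition x1 (x : V3) : R := fst (fst x).
Definition x2 (x : V3) : R := snd (fst x).
Definition x3 (x : V3) : R := snd x.

Definition lip (x y : V3) : R := - x1 x * x1 y + x2 x * x2 y + x3 x * x3 y.
Definition lnorm (x : V3) : R := sqrt (Rabs (lip x x)).
Definition lcross (x y : V3) : V3 :=
  (x2 x * x3 y - x3 x * x2 y,
   x1 x * x3 y - x3 x * x1 y,
   x2 x * x1 y - x1 x * x2 y).
Definition vscale (k : R) (x : V3) : V3 := (k * x1 x, k * x2 x, k * x3 x).
Definition vopp (x : V3) : V3 := (- x1 x, - x2 x, - x3 x).

Definition spacelike (x : V3) : Prop := lip x x > 0.
Definition timelike (x : V3) : Prop := lip x x < 0.
Definition nonnull (x : V3) : Prop := lip x x <> 0.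

Definition vD (f : R -> V3) (s : R) : V3 :=
  (Derive (fun t => x1 (f t)) s,
   Derive (fun t => x2 (f t)) s,
   Derive (fun t => x3 (f t)) s).

Definition smooth_on (a b : R) (f : R -> V3) : Prop :=
  forall (n : nat) (s : R), a < s < b ->
    ex_derive_n (fun t => x1 (f t)) n s /\
    ex_derive_n (fun t => x2 (f t)) n s /\
    ex_derive_n (fun t => x3 (f t)) n s.

Definition central_normal (q : R -> V3) (s : R) : V3 :=
  vscale (/ lnorm (vD q s)) (vD q s).
Definition asymptotic_normal (q : R -> V3) (s : R) : V3 :=
  vscale (/ lnorm (vD q s)) (lcross (vD q s) (q s)).

(** A ruled surface phi(s,v) = c(s) + v q(s), s in (a,b), given by the pair
    (c, q): q unit non-null, dq/ds non-null, c the striction curve. *)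
Definition ruled_surface_on (a b : R) (c q : R -> V3) : Prop :=
  smooth_on a b c /\ smooth_on a b q /\
  forall s, a < s < b ->
    Rabs (lip (q s) (q s)) = 1 /\
    nonnull (vD q s) /\
    lip (vD q s) (vD c s) = 0.

Definition type_M1p (a b : R) (c q : R -> V3) : Prop :=
  ruled_surface_on a b c q /\
  forall s, a < s < b -> spacelike (q s) /\ spacelike (central_normal q s).

Definition type_M2p (a b : R) (c q : R -> V3) : Prop :=
  ruled_surface_on a b c q /\
  forall s, a < s < b -> spacelike (q s) /\ timelike (central_normal q s).

(** Offsets, the rulings corresponding through the common parameter s.
    A surface is given as (base curve, ruling field); the notions only
    depend on the ruling fields.  Non-nullness of the derivative of the
    offset's ruling field is included so that its central normal is
    defined. *)
Definition mannheim_offset (a b : R) (phi phis : (R -> V3) * (R -> V3)) : Prop :=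
  forall s, a < s < b ->
    nonnull (vD (snd phis) s) /\
    (central_normal (snd phis) s = asymptotic_normal (snd phi) s \/
     central_normal (snd phis) s = vopp (asymptotic_normal (snd phi) s)).

Definition bertrand_offset (a b : R) (phi phis : (R -> V3) * (R -> V3)) : Prop :=
  forall s, a < s < b ->
    nonnull (vD (snd phis) s) /\
    (central_normal (snd phis) s = central_normal (snd phi) s \/
     central_normal (snd phis) s = vopp (central_normal (snd phi) s)).

(* Write D = dq/ds and D* = dq*/ds.  In Minkowski 3-space a vector orthogonal to
   a non-null q and to D x q, where q ⊥ D and D is non-null, is a multiple of D.
   Differentiating the constant products <h*,h*> = -1 and <h*,q> = 0 (recall
   h* = ±a ⊥ q, D) puts dh*/ds in that situation, so dh*/ds = l D; likewise
   differentiating <a*,a*> = 1 and <a*,q*> = 0 gives da*/ds = m D*.  Here m ≠ 0 as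
   da*/ds is non-null, and differentiating <h*,a*> = 0 then forces l ≠ 0, since
   <h*,D*> ≠ 0.  Normalizing, the central normal of phi_{h*} is ±h and that of
   phi_{a*} is ±h* = ±a. *)

From Stdlib Require Import Reals Lra.
From Coquelicot Require Import Coquelicot.
Open Scope R_scope.

Definition vzero : V3 := (0, 0, 0).
Definition vadd (x y : V3) : V3 := (x1 x + x1 y, x2 x + x2 y, x3 x + x3 y).

Lemma V3_ext (x y : V3) : x1 x = x1 y -> x2 x = x2 y -> x3 x = x3 y -> x = y.
Proof.
  destruct x as [[x1 x2] x3], y as [[y1 y2] y3]; cbn.
  intros -> -> ->; reflexivity.
Qed.

Ltac V3_ring :=
  apply V3_ext; unfold lip, lcross, vadd, vscale, vopp, vzero; cbn [x1 x2 x3 fst snd]; ring.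

Lemma lip_sym x y : lip x y = lip y x.
Proof. unfold lip; ring. Qed.

Lemma lip_scale_l k x y : lip (vscale k x) y = k * lip x y.
Proof. unfold lip, vscale; cbn [x1 x2 x3 fst snd]; ring. Qed.

Lemma lip_scale_r k x y : lip x (vscale k y) = k * lip x y.
Proof. unfold lip, vscale; cbn [x1 x2 x3 fst snd]; ring. Qed.

Lemma lip_opp_l x y : lip (vopp x) y = - lip x y.
Proof. unfold lip, vopp; cbn [x1 x2 x3 fst snd]; ring. Qed.

Lemma lip_lcross_l x y : lip (lcross x y) x = 0.
Proof. unfold lip, lcross; cbn [x1 x2 x3 fst snd]; ring. Qed.

Lemma lip_lcross_r x y : lip (lcross x y) y = 0.
Proof. unfold lip, lcross; cbn [x1 x2 x3 fst snd]; ring. Qed.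

Lemma lip_lcross_self x y :
  lip (lcross x y) (lcross x y) = lip x y ^ 2 - lip x x * lip y y.
Proof. unfold lip, lcross; cbn [x1 x2 x3 fst snd]; ring. Qed.

Lemma lcross_lcross x y z :
  lcross x (lcross y z) = vadd (vscale (lip x y) z) (vopp (vscale (lip x z) y)).
Proof. V3_ring. Qed.

Lemma lcross_scale_r k x y : lcross x (vscale k y) = vscale k (lcross x y).
Proof. V3_ring. Qed.

Lemma lcross_eq0_parallel w D : nonnull D -> lcross w D = vzero -> exists l, w = vscale l D.
Proof.
  intros HD Hw. exists (lip D w / lip D D).
  assert (E := lcross_lcross D w D). rewrite Hw in E.
  apply V3_ext; [apply (f_equal x1) in E | apply (f_equal x2) in E | apply (f_equal x3) in E];
    unfold lcross, vadd, vscale, vopp, vzero in *; cbn [x1 x2 x3 fst snd] in *;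
    field_simplify_eq; auto; lra.
Qed.

Lemma orthogonal_lcross_eq0 w q D :
  nonnull q -> lip q D = 0 -> lip w q = 0 -> lip w (lcross D q) = 0 ->
  lcross w D = vzero.
Proof.
  intros Hq HqD Hwq HwDq.
  assert (E : vscale (- lip q q) (lcross w D) = vzero).
  { rewrite <- lcross_scale_r.
    replace (vscale (- lip q q) D) with (lcross q (lcross D q))
      by (rewrite lcross_lcross, HqD; V3_ring).
    rewrite lcross_lcross, Hwq, HwDq; V3_ring. }
  apply V3_ext; [apply (f_equal x1) in E | apply (f_equal x2) in E | apply (f_equal x3) in E];
    unfold vscale, vzero in *; cbn [x1 x2 x3 fst snd] in *.
  all: apply Rmult_integral in E; destruct E as [E|E]; [exfalso; apply Hq; lra | exact E].
Qed.

Definition normalize (x : V3) : V3 := vscale (/ lnorm x) x.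
Definition up_to_sign (x y : V3) : Prop := x = y \/ x = vopp y.

Lemma up_to_sign_trans x y z : up_to_sign x y -> up_to_sign y z -> up_to_sign x z.
Proof.
  intros [-> | ->] [-> | ->]; [left | right | right | left]; auto.
  V3_ring.
Qed.

Lemma up_to_sign_lip_eq0 x y z : up_to_sign x y -> lip y z = 0 -> lip x z = 0.
Proof. intros [-> | ->] H; rewrite ?lip_opp_l, H; ring. Qed.

Lemma lnorm_sqr x : lnorm x * lnorm x = Rabs (lip x x).
Proof. apply sqrt_sqrt, Rabs_pos. Qed.

Lemma lnorm_pos x : nonnull x -> 0 < lnorm x.
Proof. intro H; apply sqrt_lt_R0, Rabs_pos_lt, H. Qed.

Lemma lnorm_scale k x : lnorm (vscale k x) = Rabs k * lnorm x.
Proof.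
  unfold lnorm. rewrite lip_scale_l, lip_scale_r, <- Rmult_assoc, <- Rsqr_def.
  rewrite Rabs_mult, Rabs_pos_eq, sqrt_mult_alt, sqrt_Rsqr_abs
    by (apply Rle_0_sqr || apply Rabs_pos). reflexivity.
Qed.

Lemma nonnull_scale k x : k <> 0 -> nonnull x -> nonnull (vscale k x).
Proof.
  unfold nonnull; intros Hk Hx. rewrite lip_scale_l, lip_scale_r.
  repeat apply Rmult_integral_contrapositive_currified; auto.
Qed.

Lemma lip_normalize x : nonnull x -> lip (normalize x) (normalize x) = lip x x / Rabs (lip x x).
Proof.
  intro Hx. unfold normalize. rewrite lip_scale_l, lip_scale_r, <- lnorm_sqr.
  assert (Hn := lnorm_pos x Hx). field. lra.
Qed.

Lemma normalize_timelike x : nonnull x -> timelike (normalize x) -> timelike x.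
Proof.
  unfold timelike; intros Hx. rewrite lip_normalize by exact Hx.
  destruct (Rlt_or_le (lip x x) 0) as [Hneg | Hpos]; [auto|].
  rewrite Rabs_pos_eq, Rdiv_diag by (auto; lra). lra.
Qed.

Lemma lip_normalize_timelike x : timelike x -> lip (normalize x) (normalize x) = -1.
Proof.
  unfold timelike; intros Hx. rewrite lip_normalize by (unfold nonnull; lra).
  rewrite Rabs_left by exact Hx. field. lra.
Qed.

Lemma lip_normalize_self x : nonnull x -> lip (normalize x) x <> 0.
Proof.
  intro Hx. unfold normalize. rewrite lip_scale_l.
  apply Rmult_integral_contrapositive_currified; [|exact Hx].
  apply Rinv_neq_0_compat, Rgt_not_eq, lnorm_pos, Hx.
Qed.

Lemma normalize_scale k x : k <> 0 -> nonnull x -> up_to_sign (normalize (vscale k x)) (normalize x).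
Proof.
  intros Hk Hx. unfold normalize. rewrite lnorm_scale.
  assert (Hn := lnorm_pos x Hx).
  destruct (Rlt_or_le 0 k) as [Hpos | Hneg]; [left; rewrite Rabs_pos_eq by lra
                                           | right; rewrite Rabs_left by lra];
    apply V3_ext; unfold vscale, vopp; cbn [x1 x2 x3 fst snd]; field; lra.
Qed.

Definition ex_vderive (u : R -> V3) (s : R) : Prop :=
  ex_derive (fun t => x1 (u t)) s /\ ex_derive (fun t => x2 (u t)) s /\
  ex_derive (fun t => x3 (u t)) s.

Lemma smooth_on_ex_vderive a b u s :
  smooth_on a b u -> a < s < b -> ex_vderive u s /\ ex_vderive (vD u) s.
Proof. intros Hu Hs. exact (conj (Hu 1%nat s Hs) (Hu 2%nat s Hs)). Qed.

Lemma is_derive_lip (u v : R -> V3) s : ex_vderive u s -> ex_vderive v s ->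
  is_derive (fun t => lip (u t) (v t)) s (lip (vD u s) (v s) + lip (u s) (vD v s)).
Proof.
  intros Hu Hv. unfold ex_vderive, lip, vD in *; cbn [x1 x2 x3 fst snd].
  set (u1 := fun t => x1 (u t)) in *; set (u2 := fun t => x2 (u t)) in *;
  set (u3 := fun t => x3 (u t)) in *; set (v1 := fun t => x1 (v t)) in *;
  set (v2 := fun t => x2 (v t)) in *; set (v3 := fun t => x3 (v t)) in *.
  apply (is_derive_ext (fun t => - u1 t * v1 t + u2 t * v2 t + u3 t * v3 t)); [reflexivity|].
  auto_derive; [tauto | unfold u1, u2, u3, v1, v2, v3; ring].
Qed.

Lemma lip_const_derive a b C u v s :
  (forall t, a < t < b -> lip (u t) (v t) = C) -> a < s < b ->
  ex_vderive u s -> ex_vderive v s ->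
  lip (vD u s) (v s) + lip (u s) (vD v s) = 0.
Proof.
  intros HC Hs Hu Hv.
  assert (Hloc : locally s (fun t => lip (u t) (v t) = C)).
  { apply (filter_imp (fun t => a < t /\ t < b)); [intros t Ht; apply HC, Ht|].
    apply (open_and _ _ (open_gt a) (open_lt b)), Hs. }
  transitivity (Derive (fun t => lip (u t) (v t)) s).
  - symmetry; apply is_derive_unique, is_derive_lip; assumption.
  - rewrite <- (Derive_const C s). apply Derive_ext_loc, Hloc.
Qed.

Lemma ex_vderive_lcross u v s :
  ex_vderive u s -> ex_vderive v s -> ex_vderive (fun t => lcross (u t) (v t)) s.
Proof.
  intros Hu Hv. unfold ex_vderive, lcross in *; cbn [x1 x2 x3 fst snd].
  set (u1 := fun t => x1 (u t)) in *; set (u2 := fun t => x2 (u t)) in *;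
  set (u3 := fun t => x3 (u t)) in *; set (v1 := fun t => x1 (v t)) in *;
  set (v2 := fun t => x2 (v t)) in *; set (v3 := fun t => x3 (v t)) in *.
  repeat split;
  [ apply (ex_derive_ext (fun t => u2 t * v3 t - u3 t * v2 t))
  | apply (ex_derive_ext (fun t => u1 t * v3 t - u3 t * v1 t))
  | apply (ex_derive_ext (fun t => u2 t * v1 t - u1 t * v2 t)) ];
  try reflexivity; auto_derive; tauto.
Qed.

Lemma ex_vderive_scale_invlnorm D w s : ex_vderive D s -> ex_vderive w s -> nonnull (D s) ->
  ex_vderive (fun t => vscale (/ lnorm (D t)) (w t)) s.
Proof.
  intros HD Hw HDs. unfold ex_vderive, vscale, nonnull, lnorm, lip in *; cbn [x1 x2 x3 fst snd].
  set (d1 := fun t => x1 (D t)) in *; set (d2 := fun t => x2 (D t)) in *;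
  set (d3 := fun t => x3 (D t)) in *; set (w1 := fun t => x1 (w t)) in *;
  set (w2 := fun t => x2 (w t)) in *; set (w3 := fun t => x3 (w t)) in *.
  set (n := fun t => / sqrt (Rabs (- d1 t * d1 t + d2 t * d2 t + d3 t * d3 t))).
  assert (Hpos : 0 < Rabs (- d1 s * d1 s + d2 s * d2 s + d3 s * d3 s))
    by (apply Rabs_pos_lt; exact HDs).
  repeat split;
  [ apply (ex_derive_ext (fun t => n t * w1 t))
  | apply (ex_derive_ext (fun t => n t * w2 t))
  | apply (ex_derive_ext (fun t => n t * w3 t)) ];
  try reflexivity; unfold n; auto_derive;
  repeat split; try tauto; auto; apply Rgt_not_eq, sqrt_lt_R0, Hpos.
Qed.

Lemma central_normalE q s : central_normal q s = normalize (vD q s).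
Proof. reflexivity. Qed.

Lemma lip_asymptotic_normal_q q s : lip (asymptotic_normal q s) (q s) = 0.
Proof. unfold asymptotic_normal. rewrite lip_scale_l, lip_lcross_r. ring. Qed.

Lemma lip_asymptotic_normal_vD q s : lip (asymptotic_normal q s) (vD q s) = 0.
Proof. unfold asymptotic_normal. rewrite lip_scale_l, lip_lcross_l. ring. Qed.

Lemma lip_central_asymptotic_normal q s :
  lip (central_normal q s) (asymptotic_normal q s) = 0.
Proof.
  unfold central_normal, asymptotic_normal.
  rewrite lip_scale_l, lip_scale_r, lip_sym, lip_lcross_l. ring.
Qed.

Lemma lip_asymptotic_normal_eq0 w q s : nonnull (vD q s) ->
  lip w (asymptotic_normal q s) = 0 -> lip w (lcross (vD q s) (q s)) = 0.
Proof.
  intros HD. unfold asymptotic_normal. rewrite lip_scale_r. intros H.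
  apply Rmult_integral in H as [H | H]; [|exact H].
  exfalso; revert H; apply Rinv_neq_0_compat, Rgt_not_eq, lnorm_pos, HD.
Qed.

Lemma lip_asymptotic_normal_timelike q s :
  lip (q s) (q s) = 1 -> lip (q s) (vD q s) = 0 -> timelike (vD q s) ->
  lip (asymptotic_normal q s) (asymptotic_normal q s) = 1.
Proof.
  unfold timelike; intros Hq HqD HD. unfold asymptotic_normal.
  rewrite lip_scale_l, lip_scale_r, lip_lcross_self, lip_sym, HqD, Hq.
  replace (lip (vD q s) (vD q s)) with (- (lnorm (vD q s) * lnorm (vD q s)))
    by (rewrite lnorm_sqr, Rabs_left by exact HD; ring).
  assert (Hn := lnorm_pos (vD q s) ltac:(unfold nonnull; lra)).
  field. lra.
Qed.

Lemma ruled_surface_spacelike_frame a b c q s :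
  ruled_surface_on a b c q -> (forall t, a < t < b -> spacelike (q t)) -> a < s < b ->
  lip (q s) (q s) = 1 /\ lip (q s) (vD q s) = 0 /\ nonnull (vD q s).
Proof.
  intros [_ [Hq Hframe]] Hsp Hs.
  assert (Hunit : forall t, a < t < b -> lip (q t) (q t) = 1).
  { intros t Ht. destruct (Hframe t Ht) as [Habs _].
    rewrite Rabs_pos_eq in Habs by (apply Rlt_le, Hsp, Ht). exact Habs. }
  destruct (smooth_on_ex_vderive a b q s Hq Hs) as [Vq _].
  assert (E := lip_const_derive a b 1 q q s Hunit Hs Vq Vq).
  rewrite lip_sym in E.
  repeat split; [apply Hunit, Hs | lra | apply Hframe, Hs].
Qed.

Lemma vD_asymptotic_field_parallel a b C e q s :
  a < s < b -> ex_vderive e s -> ex_vderive q s ->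
  (forall t, a < t < b -> lip (e t) (e t) = C) ->
  (forall t, a < t < b -> lip (e t) (q t) = 0) ->
  up_to_sign (e s) (asymptotic_normal q s) ->
  nonnull (q s) -> lip (q s) (vD q s) = 0 -> nonnull (vD q s) ->
  exists l, vD e s = vscale l (vD q s).
Proof.
  intros Hs Ve Vq Hlen Horth Hsign Hq HqD HD.
  assert (E1 := lip_const_derive a b C e e s Hlen Hs Ve Ve).
  assert (E2 := lip_const_derive a b 0 e q s Horth Hs Ve Vq).
  rewrite (up_to_sign_lip_eq0 _ _ _ Hsign (lip_asymptotic_normal_vD q s)) in E2.
  rewrite (lip_sym (e s)) in E1.
  assert (Hn : lip (vD e s) (asymptotic_normal q s) = 0).
  { rewrite lip_sym. apply (up_to_sign_lip_eq0 _ (e s)); [|rewrite lip_sym; lra].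
    destruct Hsign as [-> | ->]; [left | right]; auto; V3_ring. }
  apply lcross_eq0_parallel; [exact HD|].
  apply (orthogonal_lcross_eq0 _ (q s)); [exact Hq | exact HqD | lra |].
  apply lip_asymptotic_normal_eq0, Hn; exact HD.
Qed.

Section MannheimOffset.

Variables (a b : R) (c q cs qs : R -> V3).
Hypotheses (Hphi : type_M1p a b c q) (Hphis : type_M2p a b cs qs)
  (Hmannheim : mannheim_offset a b (c, q) (cs, qs))
  (Has_ruled : forall s, a < s < b -> nonnull (vD (asymptotic_normal qs) s)).

Let hs := central_normal qs.
Let as_ := asymptotic_normal qs.

Lemma ruling_frame t : a < t < b ->
  lip (q t) (q t) = 1 /\ lip (q t) (vD q t) = 0 /\ nonnull (vD q t).
Proof.
  intro Ht. apply (ruled_surface_spacelike_frame a b c); [apply Hphi | | exact Ht].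
  intros t' Ht'; apply Hphi, Ht'.
Qed.

Lemma offset_ruling_frame t : a < t < b ->
  lip (qs t) (qs t) = 1 /\ lip (qs t) (vD qs t) = 0 /\ timelike (vD qs t).
Proof.
  intro Ht.
  destruct (ruled_surface_spacelike_frame a b cs qs t) as [Hq [HqD HD]];
    [apply Hphis | intros t' Ht'; apply Hphis, Ht' | exact Ht |].
  repeat split; auto. apply normalize_timelike; [exact HD | apply Hphis, Ht].
Qed.

Lemma offset_central_normal_sign t : a < t < b -> up_to_sign (hs t) (asymptotic_normal q t).
Proof. intro Ht; apply Hmannheim, Ht. Qed.

Lemma offset_derivatives s : a < s < b ->
  exists l m, l <> 0 /\ m <> 0 /\
    vD hs s = vscale l (vD q s) /\ vD as_ s = vscale m (vD qs s).
Proof.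
  intro Hs.
  destruct (ruling_frame s Hs) as (Hq & HqD & HD).
  destruct (offset_ruling_frame s Hs) as (Hqs & HqsD & HDs).
  assert (HDs' : nonnull (vD qs s)) by (unfold nonnull, timelike in *; lra).
  destruct (smooth_on_ex_vderive a b q s) as [Vq _]; [apply Hphi | exact Hs |].
  destruct (smooth_on_ex_vderive a b qs s) as [Vqs VDqs]; [apply Hphis | exact Hs |].
  assert (Vhs : ex_vderive hs s) by exact (ex_vderive_scale_invlnorm _ _ s VDqs VDqs HDs').
  assert (Vas : ex_vderive as_ s)
    by exact (ex_vderive_scale_invlnorm _ _ s VDqs (ex_vderive_lcross _ _ s VDqs Vqs) HDs').
  destruct (vD_asymptotic_field_parallel a b (-1) hs q s Hs Vhs Vq) as [l El].
  { intros t Ht. apply lip_normalize_timelike, offset_ruling_frame, Ht. }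
  { intros t Ht. apply (up_to_sign_lip_eq0 _ _ _ (offset_central_normal_sign t Ht)),
      lip_asymptotic_normal_q. }
  { apply offset_central_normal_sign, Hs. }
  { unfold nonnull; lra. }
  { exact HqD. }
  { exact HD. }
  destruct (vD_asymptotic_field_parallel a b 1 as_ qs s Hs Vas Vqs) as [m Em].
  { intros t Ht. destruct (offset_ruling_frame t Ht) as (? & ? & ?).
    apply lip_asymptotic_normal_timelike; assumption. }
  { intros t Ht. apply lip_asymptotic_normal_q. }
  { left; reflexivity. }
  { unfold nonnull; lra. }
  { exact HqsD. }
  { exact HDs'. }
  assert (Hm : m <> 0).
  { intros ->. apply (Has_ruled s Hs). fold as_. rewrite Em, lip_scale_l, lip_scale_r. ring. }
  exists l, m. repeat split; auto.
  intros ->.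
  assert (E := lip_const_derive a b 0 hs as_ s
                 (fun t _ => lip_central_asymptotic_normal qs t) Hs Vhs Vas).
  rewrite El, Em, lip_scale_l, lip_scale_r, Rmult_0_l, Rplus_0_l in E.
  apply Rmult_integral in E as [E | E]; [exact (Hm E)|].
  exact (lip_normalize_self _ HDs' E).
Qed.

End MannheimOffset.

Theorem corollary6p3 (a b : R) (c q cs qs : R -> V3) :
  a < b ->
  type_M1p a b c q ->
  type_M2p a b cs qs ->
  mannheim_offset a b (c, q) (cs, qs) ->
  (* phi_{a*} is a ruled surface: d a*/ds non-null *)
  (forall s, a < s < b -> nonnull (vD (asymptotic_normal qs) s)) ->
  bertrand_offset a b (c, q) (cs, central_normal qs) /\
  mannheim_offset a b (c, q) (cs, asymptotic_normal qs).
Proof.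
  intros _ Hphi Hphis Hmannheim Has_ruled.
  split; intros s Hs;
    destruct (offset_derivatives a b c q cs qs Hphi Hphis Hmannheim Has_ruled s Hs)
      as (l & m & Hl & Hm & El & Em);
    destruct (ruling_frame a b c q Hphi s Hs) as (_ & _ & HD);
    destruct (offset_ruling_frame a b cs qs Hphis s Hs) as (_ & _ & HDs);
    cbn [snd].
  - split; [rewrite El; apply nonnull_scale; assumption |].
    change (up_to_sign (central_normal (central_normal qs) s) (central_normal q s)).
    rewrite central_normalE, El. apply normalize_scale; assumption.
  - split; [apply Has_ruled, Hs |].
    change (up_to_sign (central_normal (asymptotic_normal qs) s) (asymptotic_normal q s)).
    apply (up_to_sign_trans _ (central_normal qs s)); [| apply Hmannheim, Hs].
    rewrite central_normalE, Em. apply normalize_scale; [assumption |].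
    unfold nonnull, timelike in *; lra.
Qed.
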